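(* Let $k\ge 2$, $D'=\{0,1,\dots,k\}$ and $D=\{1,\dots,k\}$. The class of $k$-submodular functions on $D'$ is persistent with respect to the integral domain $D$: for every $k$-submodular $f:(D')^n\to\mathbb{R}$ and every minimiser $X^*$ of $f$ over $(D')^n$, there is a minimiser $X$ of $f$ over $D^n$ such that $X_i=X^*_i$ for every coordinate $i$ with $X^*_i\ne 0$. Furthermore, the class contains all hard constants from $D$: for each $d\in D$ there is a unary $k$-submodular function $f_d$ on $D'$ which has $v=d$ as its unique minimum.
   Context: Define symmetric idempotent operations $\sqcap,\sqcup$ on $D'=\{0,\dots,k\}$ by $0\sqcap x=0$, $0\sqcup x=x$, $x\sqcap x=x\sqcup x=x$, and $x\sqcap y=x\sqcup y=0$ for distinct $x,y\in D'\setminus\{0\}$. A function $f:(D')^r\to\mathbb{R}$ is $k$-submodular if $f(X)+f(Y)\ge f(X\sqcap Y)+f(X\sqcup Y)$ for all $X,Y\in(D')^r$, the operations applied coordinatewise. *)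

From mathcomp Require Import all_boot all_order all_algebra.
From mathcomp Require Import reals.
Set Implicit Arguments. Unset Strict Implicit. Unset Printing Implicit Defensive.
Import Order.TTheory GRing.Theory Num.Theory.
Local Open Scope ring_scope.

(* D' = {0,...,k} is 'I_k.+1 ; D = {1,...,k} are its nonzero elements. *)

Definition kmeet (k : nat) (x y : 'I_k.+1) : 'I_k.+1 :=
  if x == y then x else ord0.

Definition kjoin (k : nat) (x y : 'I_k.+1) : 'I_k.+1 :=
  if x == ord0 then y
  else if y == ord0 then x
  else if x == y then x else ord0.

Definition vmeet (k n : nat) (X Y : {ffun 'I_n -> 'I_k.+1}) : {ffun 'I_n -> 'I_k.+1} :=
  [ffun i => kmeet (X i) (Y i)].
Definition vjoin (k n : nat) (X Y : {ffun 'I_n -> 'I_k.+1}) : {ffun 'I_n -> 'I_k.+1} :=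
  [ffun i => kjoin (X i) (Y i)].

Definition ksubmodular (R : realType) (k n : nat) (f : {ffun 'I_n -> 'I_k.+1} -> R) : Prop :=
  forall X Y : {ffun 'I_n -> 'I_k.+1},
    f (vmeet X Y) + f (vjoin X Y) <= f X + f Y.

Definition integral (k n : nat) (X : {ffun 'I_n -> 'I_k.+1}) : Prop :=
  forall i, X i != ord0.

Definition is_min (R : realType) (k n : nat) (f : {ffun 'I_n -> 'I_k.+1} -> R)
  (X : {ffun 'I_n -> 'I_k.+1}) : Prop := forall Y, f X <= f Y.

Definition is_min_integral (R : realType) (k n : nat) (f : {ffun 'I_n -> 'I_k.+1} -> R)
  (X : {ffun 'I_n -> 'I_k.+1}) : Prop :=
  integral X /\ forall Y, integral Y -> f X <= f Y.

From mathcomp Require Import all_boot all_order all_algebra.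
From mathcomp Require Import reals lra.
Import Order.TTheory GRing.Theory Num.Theory.
Local Open Scope ring_scope.

(* Persistence: let X* minimise f and Y0 minimise f over D^n. Submodularity with
   the minimality of X* gives f (X* ⊔ Y) <= f Y for every Y, so the vector
   X* ⊔ (X* ⊔ Y0), which agrees with X* off its zeros and with Y0 on them, is
   integral and no worse than Y0. For hard constants, the unary cost
   0 at d, 1 at 0 and 2 elsewhere is k-submodular because two distinct values
   meet in 0 and at most one of them is d. *)

Lemma kjoin_absorb (k : nat) (x y : 'I_k.+1) :
  kjoin x (kjoin x y) = if x == ord0 then y else x.
Proof.
rewrite /kjoin; case: (eqVneq x ord0) => [_ | x0] //.
case: (eqVneq y ord0) => [_ | _]; first by rewrite (negbTE x0) eqxx.
by case: (eqVneq x y) => _; rewrite ?(negbTE x0) eqxx.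
Qed.

Lemma vjoin_absorbE (k n : nat) (X Y : {ffun 'I_n -> 'I_k.+1}) (i : 'I_n) :
  vjoin X (vjoin X Y) i = if X i == ord0 then Y i else X i.
Proof. by rewrite !ffunE kjoin_absorb. Qed.

Lemma integral_vjoin_absorb (k n : nat) (X Y : {ffun 'I_n -> 'I_k.+1}) :
  integral Y -> integral (vjoin X (vjoin X Y)).
Proof. by move=> iY i; rewrite vjoin_absorbE; case: ifP => [_ | /negbT]. Qed.

Lemma integral_min_exists {R : realType} {k n : nat} (f : {ffun 'I_n -> 'I_k.+1} -> R) :
  (0 < k)%N -> exists Y, is_min_integral f Y.
Proof.
move=> k_gt0.
pose P := [pred Y : {ffun 'I_n -> 'I_k.+1} | [forall i, Y i != ord0]].
have one_neq0 : (inord 1 : 'I_k.+1) != ord0.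
  by apply/eqP => /(congr1 val); rewrite /= inordK.
have P1 : P [ffun => inord 1] by apply/forallP => i; rewrite ffunE.
have [Y /forallP PY Ymin] := arg_minP f P1.
by exists Y; split=> // Z iZ; apply/Ymin/forallP.
Qed.

Section Persistence.

Context {R : realType} {k n : nat} {f : {ffun 'I_n -> 'I_k.+1} -> R}.
Hypothesis f_sub : ksubmodular f.

Lemma ksubmodular_min_vjoin {X} (Y : {ffun 'I_n -> 'I_k.+1}) :
  is_min f X -> f (vjoin X Y) <= f Y.
Proof. by move=> Xmin; have := f_sub X Y; have := Xmin (vmeet X Y); lra. Qed.

Lemma ksubmodular_persistent {Xs : {ffun 'I_n -> 'I_k.+1}} :
  (0 < k)%N -> is_min f Xs ->
  exists X, is_min_integral f X /\ (forall i, Xs i != ord0 -> X i = Xs i).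
Proof.
move=> k_gt0 Xmin; have [Y0 [iY0 Y0min]] := integral_min_exists f k_gt0.
exists (vjoin Xs (vjoin Xs Y0)); split; last first.
  by move=> i /negbTE Xi0; rewrite vjoin_absorbE Xi0.
split; first exact: integral_vjoin_absorb.
move=> Y iY; apply: le_trans (ksubmodular_min_vjoin _ Xmin) _.
exact: le_trans (ksubmodular_min_vjoin Y0 Xmin) (Y0min Y iY).
Qed.

End Persistence.

Lemma ksubmodular_unary (R : realType) (k : nat) (g : 'I_k.+1 -> R) :
  (forall x y, g (kmeet x y) + g (kjoin x y) <= g x + g y) ->
  ksubmodular (fun X : {ffun 'I_1 -> 'I_k.+1} => g (X ord0)).
Proof. by move=> g_sub X Y; rewrite !ffunE. Qed.

Definition hard_cost (R : realType) {k : nat} (d x : 'I_k.+1) : R :=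
  if x == d then 0 else if x == ord0 then 1 else 2.

Lemma hard_cost_ksubmodular (R : realType) (k : nat) (d : 'I_k.+1) :
  d != ord0 -> forall x y : 'I_k.+1,
  hard_cost R d (kmeet x y) + hard_cost R d (kjoin x y)
    <= hard_cost R d x + hard_cost R d y.
Proof.
move=> d0 x y.
have cost0 : hard_cost R d ord0 = 1 by rewrite /hard_cost eq_sym (negbTE d0) eqxx.
case: (eqVneq x y) => [<- | xy]; first by rewrite /kmeet /kjoin eqxx !if_same.
have -> : kmeet x y = ord0 by rewrite /kmeet (negbTE xy).
rewrite cost0; case: (eqVneq x ord0) => [-> | x0]; first by rewrite /kjoin eqxx cost0.
case: (eqVneq y ord0) => [-> | y0].
  by rewrite /kjoin (negbTE x0) eqxx cost0 addrC.
have -> : kjoin x y = ord0 by rewrite /kjoin (negbTE x0) (negbTE y0) (negbTE xy).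
rewrite cost0 /hard_cost (negbTE x0) (negbTE y0).
case: (eqVneq x d) => [xd | _]; case: (eqVneq y d) => [yd | _]; try lra.
by move: xy; rewrite xd yd eqxx.
Qed.

Lemma hard_cost_unique_min (R : realType) (k : nat) (d x : 'I_k.+1) :
  x != d -> hard_cost R d d < hard_cost R d x.
Proof. by rewrite /hard_cost eqxx => /negbTE ->; case: ifP; lra. Qed.

Theorem lemma2 (R : realType) (k : nat) (hk : (2 <= k)%N) :
  (forall (n : nat) (f : {ffun 'I_n -> 'I_k.+1} -> R),
     ksubmodular f ->
     forall Xs : {ffun 'I_n -> 'I_k.+1}, is_min f Xs ->
     exists X : {ffun 'I_n -> 'I_k.+1},
       is_min_integral f X /\ (forall i, Xs i != ord0 -> X i = Xs i))
  /\
  (forall d : 'I_k.+1, d != ord0 ->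
     exists fd : {ffun 'I_1 -> 'I_k.+1} -> R,
       ksubmodular fd /\
       forall X : {ffun 'I_1 -> 'I_k.+1},
         X != [ffun => d] -> fd [ffun => d] < fd X).
Proof.
split=> [n f f_sub Xs Xmin | d d0].
  exact: (ksubmodular_persistent f_sub (ltnW hk) Xmin).
exists (fun X => hard_cost R d (X ord0)); split.
  by apply: ksubmodular_unary; apply: hard_cost_ksubmodular.
move=> X Xd; rewrite ffunE; apply: hard_cost_unique_min.
apply: contra Xd => /eqP X0d; apply/eqP/ffunP => i.
by rewrite ffunE (ord1 i) X0d.
Qed.
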